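(* Let $(z,x)$ be a feasible solution of the cluster LP on a finite vertex set $V$, and for every $S\subseteq V$ define $y_S=\sum_{S'\supseteq S}z_{S'}$. Then for every nonempty $T\subseteq V$, the matrix $M\in\mathbb R^{V\times V}$ with entries $M_{uv}=y_{T\cup\{u,v\}}-y_{T\cup\{u\}}\,y_{T\cup\{v\}}$ (for all $u,v\in V$, including $u=v$) is positive semidefinite.
   Context: The cluster LP for a finite vertex set $V$ has a variable $z_S$ for every nonempty $S\subseteq V$ and $x_{uv}$ for every unordered pair $uv$ of distinct vertices, with constraints $\sum_{S\ni u}z_S=1$ for all $u\in V$, $\sum_{S\supseteq\{u,v\}}z_S=1-x_{uv}$ for all $uv$, and $z_S\ge0$. *)

From mathcomp Require Import all_boot all_order all_algebra.
Set Implicit Arguments. Unset Strict Implicit. Unset Printing Implicit Defensive.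
Import Order.TTheory GRing.Theory Num.Theory.
Local Open Scope ring_scope.

(* Feasibility for the cluster LP on the finite vertex set V.
   z S is only meaningful for nonempty S (z set0 is ignored);
   x u v is the pair variable, constrained for every pair of distinct u, v. *)
Definition cluster_lp_feasible (R : realFieldType) (V : finType)
    (z : {set V} -> R) (x : V -> V -> R) : Prop :=
  [/\ (forall u : V, \sum_(S : {set V} | u \in S) z S = 1),
      (forall u v : V, u != v ->
         \sum_(S : {set V} | (u \in S) && (v \in S)) z S = 1 - x u v) &
      (forall S : {set V}, S != set0 -> 0 <= z S)].

Definition yS (R : realFieldType) (V : finType) (z : {set V} -> R)
    (S : {set V}) : R :=
  \sum_(S' : {set V} | (S \subset S') && (S' != set0)) z S'.

Definition psd (R : realFieldType) (V : finType) (M : V -> V -> R) : Prop :=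
  (forall u v, M u v = M v u) /\
  (forall c : V -> R, 0 <= \sum_(u : V) \sum_(v : V) c u * M u v * c v).

From mathcomp Require Import all_boot all_order all_algebra.
From mathcomp Require Import ring lra.
Set Implicit Arguments. Unset Strict Implicit. Unset Printing Implicit Defensive.
Import Order.TTheory GRing.Theory Num.Theory.
Local Open Scope ring_scope.

(* Restricted to the supersets of T, the z_S are nonnegative weights of total
   mass at most 1 (every such S contains a fixed t in T, and the sets containing
   t have mass 1), and y_{T ∪ A} is the mass of those containing A.  For a vector
   c and f(S) = sum_{u in S} c_u, the quadratic form c^T M c is then the variance
   sum_S z_S f(S)^2 - (sum_S z_S f(S))^2, which is nonnegative for a
   subprobability. *)

Section Moments.

Variables (R : realFieldType) (V : finType).

Lemma sqr_wsum_le_wsum_sqr (I : finType) (P : pred I) (w f : I -> R) :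
  (forall i, P i -> 0 <= w i) -> \sum_(i | P i) w i <= 1 ->
  (\sum_(i | P i) w i * f i) ^+ 2 <= \sum_(i | P i) w i * f i ^+ 2.
Proof.
move=> w_ge0 W_le1.
set A := \sum_(i | P i) w i * f i.
(* Expanding gives sum w f^2 >= (2 - sum w) A^2 >= A^2. *)
have dev_ge0 : 0 <= \sum_(i | P i) w i * (f i - A) ^+ 2.
  by apply: sumr_ge0 => i Pi; rewrite mulr_ge0 ?sqr_ge0 ?w_ge0.
have dev_expand : \sum_(i | P i) w i * (f i - A) ^+ 2 =
    \sum_(i | P i) w i * f i ^+ 2 - 2 * A * A + A ^+ 2 * \sum_(i | P i) w i.
  rewrite (eq_bigr (fun i => w i * f i ^+ 2 - 2 * A * (w i * f i) + A ^+ 2 * w i));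
    last by move=> i _; ring.
  by rewrite big_split sumrB /= -!mulr_sumr.
nra.
Qed.

Variables (P : pred {set V}) (w : {set V} -> R).

Definition moment (A : {set V}) : R := \sum_(S | P S && (A \subset S)) w S.

Definition covariance (u v : V) : R :=
  moment [set u; v] - moment [set u] * moment [set v].

Lemma sum_moment1 (c : V -> R) :
  \sum_u c u * moment [set u] = \sum_(S | P S) w S * \sum_(u in S) c u.
Proof.
under eq_bigr => u _ do rewrite mulr_sumr.
rewrite (exchange_big_dep P) /=; last by move=> u S _ /andP[].
apply: eq_bigr => S PS; rewrite mulr_sumr.
apply: eq_big => [u | u _]; last by rewrite mulrC.
by rewrite PS sub1set.
Qed.

Lemma sum_moment2 (c : V -> R) :
  \sum_u \sum_v c u * moment [set u; v] * c v =
  \sum_(S | P S) w S * (\sum_(u in S) c u) ^+ 2.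
Proof.
under eq_bigr => u _ do under eq_bigr => v _ do
  rewrite /moment big_mkcondr mulr_sumr mulr_suml.
under eq_bigr => u _ do rewrite exchange_big /=.
rewrite exchange_big /=; apply: eq_bigr => S _.
rewrite [in RHS]big_mkcond expr2 big_distrlr mulr_sumr /=; apply: eq_bigr => u _.
rewrite mulr_sumr; apply: eq_bigr => v _.
rewrite subUset !sub1set.
by case: (u \in S); case: (v \in S) => /=; ring.
Qed.

Lemma quadform_covariance (c : V -> R) :
  \sum_u \sum_v c u * covariance u v * c v =
  \sum_(S | P S) w S * (\sum_(u in S) c u) ^+ 2
  - (\sum_(S | P S) w S * \sum_(u in S) c u) ^+ 2.
Proof.
rewrite -sum_moment1 -sum_moment2 expr2 mulr_suml -sumrB; apply: eq_bigr => u _.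
by rewrite mulr_sumr -sumrB; apply: eq_bigr => v _; rewrite /covariance; ring.
Qed.

Lemma covariance_psd :
  (forall S, P S -> 0 <= w S) -> \sum_(S | P S) w S <= 1 -> psd covariance.
Proof.
move=> w_ge0 mass_le1; split=> [u v | c].
  by rewrite /covariance setUC mulrC.
by rewrite quadform_covariance subr_ge0 sqr_wsum_le_wsum_sqr.
Qed.

End Moments.

Lemma eq_psd (R : realFieldType) (V : finType) (M N : V -> V -> R) :
  M =2 N -> psd M -> psd N.
Proof.
move=> eMN [symM qM]; split=> [u v | c]; first by rewrite -!eMN.
by under eq_bigr => u _ do under eq_bigr => v _ do rewrite -eMN.
Qed.

Section ClusterLP.

Variables (R : realFieldType) (V : finType) (z : {set V} -> R) (T : {set V}).
Hypothesis T_neq0 : T != set0.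

Lemma supset_neq0 (S : {set V}) : T \subset S -> S != set0.
Proof. by move=> TS; apply: contraNneq T_neq0 => S0; rewrite -subset0 -S0. Qed.

Lemma yS_setU_moment (A : {set V}) :
  yS z (T :|: A) = moment (fun S => T \subset S) z A.
Proof.
apply: eq_bigl => S; rewrite subUset.
by case TS: (T \subset S); rewrite //= (supset_neq0 TS) andbT.
Qed.

Lemma sum_supsets_le1 :
  (forall u, \sum_(S : {set V} | u \in S) z S = 1) ->
  (forall S : {set V}, S != set0 -> 0 <= z S) ->
  \sum_(S : {set V} | T \subset S) z S <= 1.
Proof.
move=> cover z_ge0; have /set0Pn[t tT] := T_neq0.
rewrite -(cover t) big_mkcond [X in _ <= X]big_mkcond /=; apply: ler_sum => S _.
case TS: (T \subset S); first by rewrite (subsetP TS).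
by case: ifP => // tS; apply/z_ge0/set0Pn; exists t.
Qed.

End ClusterLP.

Theorem lemma24 (R : realFieldType) (V : finType)
    (z : {set V} -> R) (x : V -> V -> R) :
  cluster_lp_feasible z x ->
  forall T : {set V}, T != set0 ->
    psd (fun u v : V =>
           yS z (T :|: [set u; v]) - yS z (T :|: [set u]) * yS z (T :|: [set v])).
Proof.
case=> cover _ z_ge0 T T_neq0.
apply: (@eq_psd _ _ (covariance (fun S => T \subset S) z)).
  by move=> u v; rewrite /covariance !yS_setU_moment.
apply: covariance_psd; last exact: sum_supsets_le1.
by move=> S /(supset_neq0 T_neq0) /z_ge0.
Qed.
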